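(* Let $(G,\precsim)$ be a compatible quasi-ordered abelian group such that $G^o$ is a direct summand of $G$ with complement $F$. Then $(F,\precsim|_F)$ is canonically isomorphic (via $f\mapsto f+G^o$) to the valued part $(G/G^o,\precsim)$ of $(G,\precsim)$, and the map $G^o\times F\to G$, $(a,f)\mapsto a+f$, is an isomorphism of quasi-ordered groups from $(G^o,\precsim|_{G^o})\boxtimes(F,\precsim|_F)$ onto $(G,\precsim)$.
   Context: A compatible quasi-ordered abelian group is an abelian group $G$ with a total quasi-order $\precsim$ (reflexive, transitive, any two elements comparable) such that, writing $a\sim b$ for $a\precsim b\wedge b\precsim a$: $(Q_1)$ $x\sim0\Rightarrow x=0$; $(Q_2)$ $x\precsim y\wedge y\not\sim z\Rightarrow x+z\precsim y+z$, for all $x,y,z$. With $cl(g)$ the $\sim$-class of $g$, $g$ is o-type if $cl(g)=\{g\}$ and $g$ is not of order $2$; $G^o$, the set of o-type elements, is a subgroup on which $\precsim$ is a group order. The valued part of $G$ is $G/G^o$ with the (valuational) quasi-order $g+G^o\precsim h+G^o\Leftrightarrow g-h\in G^o\vee(g-h\notin G^o\wedge g\precsim h)$. For an ordered abelian group $(A,\le)$ and an abelian group $F$ with a valuational quasi-order $\precsim_F$ (one of the form $a\precsim_F b\Leftrightarrow w(b)\le w(a)$ for a valuation $w$), the compatible product $(A,\le)\boxtimes(F,\precsim_F)$ is the group $A\times F$ with the quasi-order $(a,f)\precsim(a',f')\Leftrightarrow(f=f'=0\wedge a\le a')\vee(f'\neq0\wedge f\precsim_F f')$. An isomorphism of quasi-ordered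 groups is a group isomorphism $\phi$ with $x\precsim y\Leftrightarrow\phi(x)\precsim\phi(y)$. *)

From HB Require Import structures.
From mathcomp Require Import all_boot all_order all_algebra.
Set Implicit Arguments. Unset Strict Implicit. Unset Printing Implicit Defensive.
Import GRing.Theory.
Local Open Scope ring_scope.

Section QOG.
Variable G : zmodType.
Variable le : G -> G -> Prop.

Definition qsim (x y : G) : Prop := le x y /\ le y x.

Definition compatible_qo : Prop :=
  [/\ (forall x, le x x),
      (forall x y z, le x y -> le y z -> le x z),
      (forall x y, le x y \/ le y x),
      (forall x, qsim x 0 -> x = 0) &
      (forall x y z, le x y -> ~ qsim y z -> le (x + z) (y + z))].

Definition order2 (g : G) : Prop := g <> 0 /\ g + g = 0.

Definition otype (g : G) : Prop := (forall h, qsim h g -> h = g) /\ ~ order2 g.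

(* the valuational quasi-order on G/G^o, expressed on a quotient (Q, pi) of G
   by G^o: the quasi-order of the classes pi g, pi h *)
Definition valued_le (Q : zmodType) (pi : G -> Q) (x y : Q) : Prop :=
  exists g h, [/\ pi g = x, pi h = y &
     (otype (g - h) \/ (~ otype (g - h) /\ le g h))].

(* the compatible product (G^o, <=) [x] (F, <=|F) on pairs (a, f) *)
Definition cprod_le (a f a' f' : G) : Prop :=
  (f = 0 /\ f' = 0 /\ le a a') \/ (f' <> 0 /\ le f f').

End QOG.

(* The o-type elements form a subgroup G^o, and every element x outside G^o
   satisfies x ~ -x and is not below any o-type element.  Hence adding an
   o-type element to x does not leave the class of x (x ~ x + a), so for o-type
   a, a' and x, x' in the complement F the comparison of a + x with a' + x'
   is decided by x and x' alone unless both vanish: this is exactly the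
   compatible product.  The valued part compares classes by their F-components,
   which gives the first isomorphism. *)
From Stdlib Require Import Classical.
From HB Require Import structures.
From mathcomp Require Import all_boot all_order all_algebra.
Import GRing.Theory.
Local Open Scope ring_scope.

Section CompatibleQuasiOrder.
Set Implicit Arguments. Unset Strict Implicit.
Variables (G : zmodType) (le : G -> G -> Prop).
Hypothesis Hqo : compatible_qo le.

Let le_refl x : le x x. Proof. by case: Hqo. Qed.
Let le_trans y x z : le x y -> le y z -> le x z. Proof. by case: Hqo => _ /(_ x y z). Qed.
Let le_total x y : le x y \/ le y x. Proof. by case: Hqo. Qed.
Let le_addr x y z : le x y -> ~ qsim le y z -> le (x + z) (y + z).
Proof. by case: Hqo => _ _ _ _; apply. Qed.

Lemma qsim_eq0 x : qsim le x 0 -> x = 0.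
Proof. by case: Hqo => _ _ _ /(_ x). Qed.

Lemma qsim0_eq0 x : qsim le 0 x -> x = 0.
Proof. by move=> [h1 h2]; apply: qsim_eq0; split. Qed.

Lemma otype0 : otype le 0.
Proof. by split=> [h /qsim_eq0 //|[]]. Qed.

(* Some h <> x satisfies h ~ x; if x were not ~ -x, adding -x would give
   h - x ~ 0. *)
Lemma non_otype_qsim_opp x : ~ otype le x -> qsim le x (- x).
Proof.
move=> Hx; case: (classic (order2 x)) => [[_ xx0]|not2].
  have -> : - x = x by apply/eqP; rewrite eq_sym -subr_eq0 opprK xx0.
  by split; apply: le_refl.
have [h Hh] : exists h, ~ (qsim le h x -> h = x).
  by apply: not_all_ex_not => Hcl; apply: Hx; split.
have [[hx xh] hx_neq] := imply_to_and _ _ Hh.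
apply: NNPP => nsim; apply: hx_neq; apply/eqP; rewrite -subr_eq0; apply/eqP.
have nsim_h : ~ qsim le h (- x).
  by move=> [a b]; apply: nsim; split; [apply: le_trans a | apply: le_trans hx].
have := le_addr xh nsim_h; have := le_addr hx nsim; rewrite !subrr.
by move=> h1 h2; apply: qsim_eq0.
Qed.

Lemma non_otype_not_le0 x : ~ otype le x -> ~ le x 0.
Proof.
move=> Hx hx0; have x0 : x <> 0 by move=> e; apply: Hx; rewrite e; apply: otype0.
have nsim : ~ qsim le 0 (- x) by move=> /qsim0_eq0 /eqP; rewrite oppr_eq0 => /eqP.
have := le_addr hx0 nsim; rewrite subrr add0r => hx0'.
have [_ hnx] := non_otype_qsim_opp Hx.
by apply: x0; apply: qsim_eq0; split=> //; apply: le_trans hnx.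
Qed.

Lemma otype_qsim_opp_eq0 a : otype le a -> qsim le a (- a) -> a = 0.
Proof.
move=> [Hcl Hn2] [s1 s2]; have e : - a = a by apply: Hcl; split.
by apply: NNPP => a0; apply: Hn2; split=> //; rewrite -{2}e subrr.
Qed.

Lemma otype_ge0_eq0 a : otype le a -> le 0 a -> le 0 (- a) -> a = 0.
Proof.
move=> Ha h1 h2; case: (classic (qsim le a (- a))) => [|nsim].
  exact: otype_qsim_opp_eq0.
have := le_addr h1 nsim; rewrite subrr add0r => h3.
by apply/eqP; rewrite -oppr_eq0; apply/eqP; apply: qsim_eq0.
Qed.

Hypothesis otypeB : forall a b, otype le a -> otype le b -> otype le (a - b).

Lemma otypeN a : otype le a -> otype le (- a).
Proof. by move=> Ha; rewrite -sub0r; apply: otypeB => //; apply: otype0. Qed.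

Lemma non_otypeN x : ~ otype le x -> ~ otype le (- x).
Proof. by move=> Hx /otypeN; rewrite opprK. Qed.

Lemma non_otypeDr x a : ~ otype le x -> otype le a -> ~ otype le (x + a).
Proof. by move=> Hx Ha Hxa; apply: Hx; rewrite -(addrK a x); apply: otypeB. Qed.

Lemma non_otype_not_le_otype a x : otype le a -> ~ otype le x -> ~ le x a.
Proof.
move=> Ha Hx hxa; case: (classic (a = 0)) => [a0 | a_neq0].
  by apply: (non_otype_not_le0 Hx); rewrite -a0.
have nsim : ~ qsim le a (- a) by move/(otype_qsim_opp_eq0 Ha).
have := le_addr hxa nsim; rewrite subrr.
by apply: non_otype_not_le0; apply: non_otypeDr => //; apply: otypeN.
Qed.

Lemma le_otype_non_otype a x : otype le a -> ~ otype le x -> le a x.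
Proof.
by move=> Ha Hx; case: (le_total a x) => // /(non_otype_not_le_otype Ha Hx).
Qed.

Lemma non_otype_le_sub0 u v :
  ~ otype le u -> ~ le v u -> le 0 (v - u).
Proof.
move=> Hu nvu; have uv : le u v by case: (le_total u v).
have nsim : ~ qsim le v (- u).
  by move=> [a _]; apply: nvu; have [_ s] := non_otype_qsim_opp Hu; apply: le_trans s.
by have := le_addr uv nsim; rewrite subrr.
Qed.

(* If v <= u failed, then both v - u and u - v = (-u) - (-v) would be >= 0. *)
Lemma non_otype_le_otype_sub u v :
  ~ otype le u -> ~ otype le v -> otype le (v - u) -> le v u.
Proof.
move=> Hu Hv Hvu; apply: NNPP => nvu.
have nvu' : ~ le (- v) (- u).
  move=> h; apply: nvu; have [s1 _] := non_otype_qsim_opp Hv.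
  have [_ s2] := non_otype_qsim_opp Hu.
  exact: le_trans s1 (le_trans h s2).
have h1 := non_otype_le_sub0 Hu nvu.
have := non_otype_le_sub0 (non_otypeN Hu) nvu'.
rewrite opprK addrC -opprB => h2.
by apply: nvu; move/eqP: (otype_ge0_eq0 Hvu h1 h2); rewrite subr_eq0 => /eqP ->.
Qed.

Lemma non_otype_qsim_addr x a :
  ~ otype le x -> otype le a -> qsim le x (x + a).
Proof.
move=> Hx Ha; have Hxa := non_otypeDr Hx Ha.
split; apply: non_otype_le_otype_sub => //; last by rewrite addrAC subrr add0r.
by rewrite opprD addrA subrr sub0r; apply: otypeN.
Qed.

Lemma le_otype_addl a x y :
  otype le a -> ~ otype le x -> le (a + x) y <-> le x y.
Proof.
move=> Ha Hx; have [s1 s2] := non_otype_qsim_addr Hx Ha.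
by rewrite addrC; split; apply: le_trans.
Qed.

Lemma le_otype_addr a x y :
  otype le a -> ~ otype le x -> le y (a + x) <-> le y x.
Proof.
move=> Ha Hx; have [s1 s2] := non_otype_qsim_addr Hx Ha.
by rewrite addrC; split=> h; [apply: le_trans s2 | apply: le_trans s1].
Qed.

Lemma cprod_leE a x a' x' :
  otype le a -> otype le a' ->
  (x <> 0 -> ~ otype le x) -> (x' <> 0 -> ~ otype le x') ->
  cprod_le le a x a' x' <-> le (a + x) (a' + x').
Proof.
move=> Ha Ha' Hx Hx'; rewrite /cprod_le.
case: (classic (x' = 0)) => [-> | /[dup] x'0 /Hx' {}Hx'].
  rewrite addr0; case: (classic (x = 0)) => [-> | /[dup] x0 /Hx {}Hx].
    by rewrite addr0; split=> [[[_ [_ //]] | [] //] | h]; left.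
  split=> [[[] // | [] //] | h]; exfalso.
  by apply: (non_otype_not_le_otype Ha') h; rewrite addrC; apply: non_otypeDr.
rewrite le_otype_addr //.
case: (classic (x = 0)) => [-> | /Hx {}Hx].
  have le0x' : le 0 x' by apply: le_otype_non_otype => //; apply: otype0.
  by rewrite addr0; split=> _; [apply: le_otype_non_otype | right].
rewrite le_otype_addl //.
by split=> [[[_ [/x'0 []]] | [_ //]] | h]; right.
Qed.

End CompatibleQuasiOrder.

Section DirectComplement.
Variables (G : zmodType) (le : G -> G -> Prop) (F : G -> Prop).
Variables (Q : zmodType) (pi : {additive G -> Q}).
Hypothesis Hqo : compatible_qo le.
Hypothesis FB : forall x y, F x -> F y -> F (x - y).
Hypothesis F_otype : forall x, F x -> otype le x -> x = 0.
Hypothesis decomp : forall g, exists a f, [/\ otype le a, F f & g = a + f].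
Hypothesis pi_surj : forall y : Q, exists g, pi g = y.
Hypothesis pi_ker : forall g, pi g = 0 <-> otype le g.

Let otypeB a b : otype le a -> otype le b -> otype le (a - b).
Proof. by move=> /pi_ker Ha /pi_ker Hb; apply/pi_ker; rewrite raddfB Ha Hb subr0. Qed.

Let F_non_otype f : F f -> f <> 0 -> ~ otype le f.
Proof. by move=> Hf f0 /(F_otype Hf). Qed.

Lemma pi_otype_addl a g : otype le a -> pi (a + g) = pi g.
Proof. by move/pi_ker => pa; rewrite raddfD pa add0r. Qed.

Lemma complement_pi_inj f f' : F f -> F f' -> pi f = pi f' -> f = f'.
Proof.
move=> Hf Hf' e; apply/eqP; rewrite -subr_eq0; apply/eqP.
by apply: F_otype; [apply: FB | apply/pi_ker; rewrite raddfB e subrr].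
Qed.

Lemma complement_pi_surj y : exists f, F f /\ pi f = y.
Proof.
have [g <-] := pi_surj y; have [a [f [Ha Hf ->]]] := decomp g.
by exists f; rewrite pi_otype_addl.
Qed.

Lemma sum_decomposition_uniq a f a' f' :
  otype le a -> F f -> otype le a' -> F f' -> a + f = a' + f' ->
  a = a' /\ f = f'.
Proof.
move=> Ha Hf Ha' Hf' e.
have ff' : f = f'.
  by apply: complement_pi_inj => //; rewrite -(pi_otype_addl f Ha) e pi_otype_addl.
by split=> //; move: e; rewrite ff' => /addIr.
Qed.

Lemma complement_cprod_leE a f a' f' :
  otype le a -> F f -> otype le a' -> F f' ->
  cprod_le le a f a' f' <-> le (a + f) (a' + f').
Proof. by move=> Ha Hf Ha' Hf'; apply: cprod_leE => //; apply: F_non_otype. Qed.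

Lemma complement_le_valuedE f f' :
  F f -> F f' -> le f f' <-> valued_le le pi (pi f) (pi f').
Proof.
move=> Hf Hf'; split=> [h | [g [h [eg eh Hgh]]]].
  exists f, f'; split=> //.
  by case: (classic (otype le (f - f'))); [left | right].
have [a [g' [Ha Hg' eg']]] := decomp g; have [b [h' [Hb Hh' eh']]] := decomp h.
have <- : g' = f by apply: complement_pi_inj; rewrite // -eg eg' pi_otype_addl.
have <- : h' = f' by apply: complement_pi_inj; rewrite // -eh eh' pi_otype_addl.
subst g h; case: Hgh => [/pi_ker | [_ Hle]].
  rewrite raddfB !pi_otype_addl // => /eqP; rewrite subr_eq0 => /eqP e.
  by rewrite (complement_pi_inj Hg' Hh' e); case: Hqo.
move: Hle; rewrite -complement_cprod_leE // => -[[-> [-> _]] | [_ //]].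
by case: Hqo.
Qed.

End DirectComplement.

Theorem mainTheorem12 (G : zmodType) (le : G -> G -> Prop)
  (F : G -> Prop)
  (Q : zmodType) (pi : {additive G -> Q}) :
  compatible_qo le ->
  (* F is a subgroup of G *)
  F 0 -> (forall x y, F x -> F y -> F (x - y)) ->
  (* F is a complement of G^o: G = G^o (+) F *)
  (forall x, F x -> otype le x -> x = 0) ->
  (forall g, exists a f, [/\ otype le a, F f & g = a + f]) ->
  (* (Q, pi) is the quotient G/G^o *)
  (forall y : Q, exists g, pi g = y) ->
  (forall g, pi g = 0 <-> otype le g) ->
  (* (1) f |-> f + G^o is an isomorphism (F, le|F) ~ (G/G^o, valued order) *)
  ((forall f f', F f -> F f' -> pi f = pi f' -> f = f') /\
   (forall y : Q, exists f, F f /\ pi f = y) /\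
   (forall f f', F f -> F f' -> (le f f' <-> valued_le le pi (pi f) (pi f'))))
  /\
  (* (2) (a, f) |-> a + f is an isomorphism G^o [x] F ~ G *)
  ((forall a f a' f', otype le a -> F f -> otype le a' -> F f' ->
        a + f = a' + f' -> a = a' /\ f = f') /\
   (forall g, exists a f, [/\ otype le a, F f & g = a + f]) /\
   (forall a f a' f', otype le a -> F f -> otype le a' -> F f' ->
        (cprod_le le a f a' f' <-> le (a + f) (a' + f')))).
Proof.
move=> Hqo _ FB F_otype decomp pi_surj pi_ker.
split; split; [| split | | split].
- exact: complement_pi_inj FB F_otype pi_ker.
- exact: complement_pi_surj decomp pi_surj pi_ker.
- exact: complement_le_valuedE Hqo FB F_otype decomp pi_ker.
- exact: sum_decomposition_uniq FB F_otype pi_ker.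
- exact: decomp.
- exact: complement_cprod_leE Hqo F_otype pi_ker.
Qed.
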